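(* Let $\mathcal{H}$ be a separable, infinite dimensional, complex Hilbert space, let $T_{1},T_{3}\in\mathcal{B}(\mathcal{H})$ and let $T_{2},T_{4}$ be bounded operators on a (not necessarily separable) Hilbert space $\widetilde{\mathcal{H}}$. If $T_{1}\oplus T_{2}$ is unitarily equivalent to $T_{3}\oplus T_{4}$ (as operators on $\mathcal{H}\oplus\widetilde{\mathcal{H}}$), then there is a separable closed subspace $\mathcal{M}\subset\widetilde{\mathcal{H}}$ that is reducing for both $T_{2}$ and $T_{4}$ such that $T_{1}\oplus(T_{2}|_{\mathcal{M}})$ is unitarily equivalent to $T_{3}\oplus(T_{4}|_{\mathcal{M}})$.
   Context: A closed subspace is reducing for an operator $S$ if it is invariant under both $S$ and $S^{*}$. Two operators $A\in\mathcal{B}(\mathcal{K}_1)$, $B\in\mathcal{B}(\mathcal{K}_2)$ are unitarily equivalent if $B=WAW^{*}$ for some unitary $W:\mathcal{K}_1\to\mathcal{K}_2$. *)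

From mathcomp Require Import all_boot all_algebra.
From mathcomp Require Export complex.
From mathcomp Require Export reals.
Set Implicit Arguments. Unset Strict Implicit. Unset Printing Implicit Defensive.
Import GRing.Theory Num.Theory.
Local Open Scope ring_scope.

Section Hilbert.
Variable R : realType.
Variable V : lmodType R[i].
Variable ip : V -> V -> R[i].

Definition is_inner_product : Prop :=
  [/\ (forall (a : R[i]) (x y z : V), ip (a *: x + y) z = a * ip x z + ip y z),
      (forall x y : V, ip y x = conjc (ip x y)),
      (forall x : V, 0 <= complex.Re (ip x x)) &
      (forall x : V, ip x x = 0 -> x = 0)].

Definition hnorm (x : V) : R := Num.sqrt (complex.Re (ip x x)).

Definition cauchy_seq (u : nat -> V) : Prop :=
  forall e : R, 0 < e -> exists N : nat, forall m n : nat,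
    (N <= m)%N -> (N <= n)%N -> hnorm (u m - u n) < e.

Definition converges_to (u : nat -> V) (x : V) : Prop :=
  forall e : R, 0 < e -> exists N : nat, forall n : nat,
    (N <= n)%N -> hnorm (u n - x) < e.

Definition is_complete : Prop :=
  forall u : nat -> V, cauchy_seq u -> exists x : V, converges_to u x.

Definition is_hilbert : Prop := is_inner_product /\ is_complete.

Definition infinite_dimensional : Prop :=
  forall s : seq V, exists x : V,
    ~ (exists c : 'I_(size s) -> R[i], x = \sum_(i < size s) c i *: s`_i).

Definition separable_set (M : V -> Prop) : Prop :=
  exists d : nat -> V, (forall n, M (d n)) /\
    forall x, M x -> forall e : R, 0 < e -> exists n, hnorm (x - d n) < e.

Definition separable_space : Prop := separable_set (fun _ => True).

Definition closed_subspace (M : V -> Prop) : Prop :=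
  [/\ M 0,
      (forall (a : R[i]) x y, M x -> M y -> M (a *: x + y)) &
      (forall (u : nat -> V) x, (forall n, M (u n)) -> converges_to u x -> M x)].

Definition bounded_op (T : V -> V) : Prop :=
  (forall (a : R[i]) x y, T (a *: x + y) = a *: T x + T y) /\
  exists K : R, forall x, hnorm (T x) <= K * hnorm x.

Definition is_adjoint (S A : V -> V) : Prop :=
  forall x y, ip (S x) y = ip x (A y).

Definition invariant (S : V -> V) (M : V -> Prop) : Prop :=
  forall x, M x -> M (S x).

Definition reducing (S : V -> V) (M : V -> Prop) : Prop :=
  invariant S M /\ exists A, is_adjoint S A /\ invariant A M.

Definition unitary_equiv_on (N : V -> Prop) (A B : V -> V) : Prop :=
  exists U Us : V -> V,
    invariant U N /\ invariant Us N /\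
    (forall (a : R[i]) x y, N x -> N y -> U (a *: x + y) = a *: U x + U y) /\
    (forall x y, N x -> N y -> ip (U x) y = ip x (Us y)) /\
    (forall x, N x -> U (Us x) = x) /\
    (forall x, N x -> Us (U x) = x) /\
    (forall x, N x -> B x = U (A (Us x))).

End Hilbert.

Definition dsum_ip (R : realType) (V W : lmodType R[i])
  (ip1 : V -> V -> R[i]) (ip2 : W -> W -> R[i]) (x y : V * W) : R[i] :=
  ip1 x.1 y.1 + ip2 x.2 y.2.

Definition dsum_op (V W : Type) (A : V -> V) (B : W -> W) (x : V * W) : V * W :=
  (A x.1, B x.2).

(* Let U be the unitary with T3 (+) T4 = U (T1 (+) T2) U^*, and (d n) a dense sequence in H.
   Take for M the smallest closed subspace of Ht containing the Ht-components of U (d n, 0) and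
   U^* (d n, 0) and invariant under T2, T2^*, T4, T4^* and the Ht-diagonal blocks of U and U^*.
   It is the closed span of countably many vectors, hence separable, and it reduces T2 and T4.
   By density and continuity it contains the Ht-component of U (h, 0) and U^* (h, 0) for every h,
   so U and U^* map H (+) M into itself and restrict to the required unitary equivalence. The
   adjoints T2^*, T4^* come from the Riesz representation theorem, itself a consequence of the
   projection theorem. *)

From Pilot Require Import Defs.
From mathcomp Require Import all_boot all_order all_algebra.
From mathcomp Require Import complex reals.
From mathcomp Require Import ring lra.
From mathcomp Require Import boolp classical_sets.
Set Implicit Arguments. Unset Strict Implicit. Unset Printing Implicit Defensive.
Import Order.TTheory GRing.Theory Num.Theory.
Local Open Scope ring_scope.
Local Open Scope complex_scope.

Local Notation Re := complex.Re.
Local Notation Im := complex.Im.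
Local Notation normc := Normc.normc.

Lemma normc_ge0 (R : rcfType) (a : R[i]) : 0 <= normc a.
Proof. by case: a => *; apply: sqrtr_ge0. Qed.

Section InnerProduct.
Variables (R : realType) (V : lmodType R[i]) (ip : V -> V -> R[i]).
Hypothesis hip : is_inner_product ip.

Let ipL a x y z : ip (a *: x + y) z = a * ip x z + ip y z.
Proof. by case: hip. Qed.

Lemma ipC x y : ip y x = conjc (ip x y).
Proof. by case: hip. Qed.

Lemma ip0l z : ip 0 z = 0.
Proof.
have := ipL 1 0 0 z; rewrite scaler0 addr0 mul1r => h.
by apply: (addrI (ip 0 z)); rewrite addr0 -h.
Qed.

Lemma ipDl x y z : ip (x + y) z = ip x z + ip y z.
Proof. by rewrite -[x]scale1r ipL mul1r scale1r. Qed.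

Lemma ipZl a x z : ip (a *: x) z = a * ip x z.
Proof. by rewrite -[a *: x]addr0 ipL ip0l addr0. Qed.

Lemma ipBl x y z : ip (x - y) z = ip x z - ip y z.
Proof. by rewrite ipDl -scaleN1r ipZl mulN1r. Qed.

Lemma ip0r z : ip z 0 = 0.
Proof. by rewrite ipC ip0l conjc0. Qed.

Lemma ipDr x y z : ip z (x + y) = ip z x + ip z y.
Proof. by rewrite ipC ipDl rmorphD /= -!ipC. Qed.

Lemma ipZr a x z : ip z (a *: x) = conjc a * ip z x.
Proof. by rewrite ipC ipZl rmorphM /= -ipC. Qed.

Lemma ipBr x y z : ip z (x - y) = ip z x - ip z y.
Proof. by rewrite ipC ipBl rmorphB /= -!ipC. Qed.

Lemma ipr_inj z1 z2 : (forall x, ip x z1 = ip x z2) -> z1 = z2.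
Proof.
move=> h; apply/eqP; rewrite -subr_eq0; apply/eqP.
by case: hip => _ _ _; apply; rewrite ipBr h subrr.
Qed.

Lemma Im_ip_self x : Im (ip x x) = 0.
Proof. by have := ipC x x; case: (ip x x) => a b /= [] => h; lra. Qed.

Definition hnorm2 x := Re (ip x x).

Lemma hnorm2_ge0 x : 0 <= hnorm2 x.
Proof. by case: hip => _ _ + _; apply. Qed.

Lemma hnorm2_eq0 x : hnorm2 x = 0 -> x = 0.
Proof.
move=> h; case: hip => _ _ _; apply; apply/eqP; rewrite eq_complex /=.
by rewrite Im_ip_self -h !eqxx.
Qed.

Lemma sqr_hnorm x : hnorm ip x ^+ 2 = hnorm2 x.
Proof. by rewrite sqr_sqrtr // hnorm2_ge0. Qed.

Lemma hnorm_ge0 x : 0 <= hnorm ip x.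
Proof. exact: sqrtr_ge0. Qed.

Lemma hnorm0 : hnorm ip 0 = 0.
Proof. by rewrite /hnorm ip0l sqrtr0. Qed.

Lemma hnorm2D x y : hnorm2 (x + y) = hnorm2 x + hnorm2 y + 2 * Re (ip x y).
Proof.
rewrite /hnorm2 ipDl !ipDr (ipC x y).
by case: (ip x x) => ? ?; case: (ip y y) => ? ?; case: (ip x y) => ? ? /=; ring.
Qed.

Lemma hnorm2Z a x : hnorm2 (a *: x) = (Re a ^+ 2 + Im a ^+ 2) * hnorm2 x.
Proof.
rewrite /hnorm2 ipZl ipZr; have := Im_ip_self x.
by case: (ip x x) => p q /= ->; case: a => a b /=; ring.
Qed.

Lemma hnorm2_parallelogram x y :
  hnorm2 (x - y) + hnorm2 (x + y) = 2 * hnorm2 x + 2 * hnorm2 y.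
Proof.
rewrite !hnorm2D -scaleN1r hnorm2Z ipZr.
by case: (ip x y) => p q /=; ring.
Qed.

(* Expand [0 <= hnorm2 (|y|^2 x - Re <x,y> y)]. *)
Lemma Re_ip_le x y : Re (ip x y) <= hnorm ip x * hnorm ip y.
Proof.
have [y0|ny0] := eqVneq (hnorm2 y) 0.
  by rewrite (hnorm2_eq0 y0) ip0r mulr_ge0 // hnorm_ge0.
have y_gt0 : 0 < hnorm2 y by rewrite lt0r ny0 hnorm2_ge0.
have sqr_le : Re (ip x y) ^+ 2 <= (hnorm ip x * hnorm ip y) ^+ 2.
  rewrite exprMn !sqr_hnorm.
  have := hnorm2_ge0 ((hnorm2 y)%:C *: x + (- Re (ip x y))%:C *: y).
  rewrite hnorm2D !hnorm2Z ipZl ipZr /=.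
  move: y_gt0 (hnorm2_ge0 x); move: (hnorm2 x) (hnorm2 y) => a b.
  by case: (ip x y) => p q /=; nra.
have := mulr_ge0 (hnorm_ge0 x) (hnorm_ge0 y).
by move: sqr_le; move: (hnorm ip x * hnorm ip y) => a; nra.
Qed.

Lemma hnormD x y : hnorm ip (x + y) <= hnorm ip x + hnorm ip y.
Proof.
have := hnorm2D x y; have := Re_ip_le x y.
rewrite -!sqr_hnorm; have := hnorm_ge0 (x + y).
have := hnorm_ge0 x; have := hnorm_ge0 y; nra.
Qed.

Lemma hnormZ a x : hnorm ip (a *: x) = normc a * hnorm ip x.
Proof.
by rewrite /hnorm -/(hnorm2 _) hnorm2Z sqrtrM ?addr_ge0 ?sqr_ge0 //; case: a.
Qed.

Lemma hnormN x : hnorm ip (- x) = hnorm ip x.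
Proof.
rewrite -scaleN1r hnormZ /normc /=.
by rewrite oppr0 expr0n addr0 sqrrN expr1n sqrtr1 mul1r.
Qed.

Lemma hdistC x y : hnorm ip (x - y) = hnorm ip (y - x).
Proof. by rewrite -hnormN opprB. Qed.

Lemma ler_hdistD x y z : hnorm ip (x - z) <= hnorm ip (x - y) + hnorm ip (y - z).
Proof. by apply: le_trans (hnormD _ _); rewrite addrA subrK. Qed.

Lemma normr_Re_ip_le x y : `|Re (ip x y)| <= hnorm ip x * hnorm ip y.
Proof.
have := Re_ip_le x y; have := Re_ip_le (- x) y.
rewrite hnormN -scaleN1r ipZl.
by case: (ip x y) => p q /= h1 h2; rewrite ler_norml; apply/andP; split; lra.
Qed.

End InnerProduct.

Lemma invSn_lt_eventually (R : realType) (e : R) : 0 < e ->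
  exists N, forall k, (N <= k)%N -> (k.+1%:R : R)^-1 < e.
Proof.
move=> e0; exists (Num.truncn e^-1) => k hk.
rewrite -[e]invrK ltf_pV2 ?posrE ?invr_gt0 ?ltr0Sn //.
by apply: lt_le_trans (truncnS_gt _) _; rewrite ler_nat ltnS.
Qed.

Section BoundedLinear.
Variables (R : realType) (V W : lmodType R[i]).
Variables (ipV : V -> V -> R[i]) (ipW : W -> W -> R[i]).
Variables (L : V -> W) (K : R).
Hypothesis Llin : linear L.
Hypothesis LK : forall x, hnorm ipW (L x) <= K * hnorm ipV x.

Lemma lin0 : L 0 = 0.
Proof.
have := Llin 1 0 0; rewrite scaler0 addr0 scale1r => h.
by apply: (addrI (L 0)); rewrite addr0 -h.
Qed.

Lemma linB x y : L (x - y) = L x - L y.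
Proof. by rewrite -scaleN1r addrC Llin scaleN1r addrC. Qed.

Lemma bounded_lin_cvg u x : converges_to ipV u x -> converges_to ipW (L \o u) (L x).
Proof.
move=> hu e e0.
have K1 : 0 < `|K| + 1 by rewrite ltr_wpDl.
have [N hN] := hu _ (divr_gt0 e0 K1).
exists N => n /hN; rewrite ltr_pdivlMr //= -linB => hn.
apply: le_lt_trans (LK _) _; apply: le_lt_trans hn.
have := hnorm_ge0 ipV (u n - x); have := ler_norm K; nra.
Qed.

End BoundedLinear.

Section ClosedSubspace.
Variables (R : realType) (V : lmodType R[i]) (ip : V -> V -> R[i]) (M : V -> Prop).
Hypothesis Mcl : closed_subspace ip M.

Lemma closed_subspaceD x y : M x -> M y -> M (x + y).
Proof. by case: Mcl => _ Mlin _ Mx My; rewrite -[x]scale1r; apply: Mlin. Qed.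

Lemma closed_subspaceZ a x : M x -> M (a *: x).
Proof. by case: Mcl => M0 Mlin _ Mx; rewrite -[_ *: _]addr0; apply: Mlin. Qed.

Lemma closed_subspaceB x y : M x -> M y -> M (x - y).
Proof.
by move=> Mx My; rewrite -scaleN1r; apply: closed_subspaceD => //; apply: closed_subspaceZ.
Qed.

End ClosedSubspace.

Section Projection.
Variables (R : realType) (V : lmodType R[i]) (ip : V -> V -> R[i]).
Hypothesis hH : is_hilbert ip.
Let hip : is_inner_product ip := proj1 hH.
Variables (M : V -> Prop) (w : V).
Hypothesis Mcl : closed_subspace ip M.
Local Notation hnorm := (hnorm ip).
Local Notation hnorm2 := (hnorm2 ip).

Lemma nearest_orthogonal p : M p -> (forall q, M q -> hnorm (w - p) <= hnorm (w - q)) ->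
  forall n, M n -> ip (w - p) n = 0.
Proof.
move=> Mp p_near; set v := w - p.
have Re_ip_eq0 n : M n -> Re (ip v n) = 0.
  move=> Mn; set r := Re (ip v n); set c := hnorm2 n.
  have c_ge0 : 0 <= c := hnorm2_ge0 hip n.
  pose t := - r / (c + 1).
  have tE : t * (c + 1) = - r by rewrite /t mulfVK // lt0r_neq0 // ltr_wpDl.
  have := p_near _ (closed_subspaceB Mcl Mp (closed_subspaceZ Mcl t%:C Mn)).
  rewrite -ler_sqr ?nnegrE ?hnorm_ge0 // !(sqr_hnorm hip).
  have -> : w - (p - t%:C *: n) = v + t%:C *: n by rewrite opprB addrA addrAC.
  rewrite [hnorm2 (v + _)]hnorm2D // hnorm2Z // ipZr //= -/c.
  have -> : Re (conjc t%:C * ip v n) = t * r by rewrite /r; case: (ip v n) => ? ? /=; ring.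
  move: tE c_ge0; clearbody t r c; move: (hnorm2 v) => a; nra.
move=> n Mn; have := Re_ip_eq0 _ (closed_subspaceZ Mcl 'i%C Mn).
rewrite ipZr //; have := Re_ip_eq0 _ Mn.
case: (ip v n) => a b /= -> h; apply/eqP; rewrite eq_complex /= eqxx /=.
by apply/eqP; lra.
Qed.

Section MinimizingSequence.
Variables (d : R) (u : nat -> V).
Hypothesis d_ge0 : 0 <= d.
Hypothesis d_lb : forall q, M q -> d <= hnorm (w - q).
Hypothesis Mu : forall k, M (u k).
Hypothesis u_near : forall k, hnorm (w - u k) < d + (k.+1%:R)^-1.

(* The parallelogram law applied to [w - u k] and [w - u m], whose midpoint lies in [M]. *)
Lemma minimizing_sqr_dist k m :
  hnorm2 (u m - u k) <= (4 * d + 2) * ((k.+1%:R)^-1 + (m.+1%:R)^-1).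
Proof.
set mid := 2^-1 *: (u k + u m).
have near_mid : d ^+ 2 <= hnorm (w - mid) ^+ 2.
  rewrite ler_sqr ?nnegrE ?hnorm_ge0 //.
  exact: d_lb (closed_subspaceZ Mcl _ (closed_subspaceD Mcl (Mu k) (Mu m))).
have near_sqr j : hnorm (w - u j) ^+ 2 <= (d + (j.+1%:R)^-1) ^+ 2.
  rewrite ler_sqr ?nnegrE ?hnorm_ge0 ?(ltW (u_near j)) //.
  by rewrite addr_ge0 // invr_ge0 ler0n.
have := hnorm2_parallelogram hip (w - u k) (w - u m).
have -> : w - u k - (w - u m) = u m - u k by rewrite opprB addrC addrA subrK.
have -> : w - u k + (w - u m) = 2 *: (w - mid).
  rewrite scalerBr scalerA mulfV ?scale1r ?pnatr_eq0 //.
  by rewrite scalerDl scale1r opprD addrACA.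
rewrite hnorm2Z //= -!(sqr_hnorm hip).
have inv_le1 j : (j.+1%:R : R)^-1 <= 1 by rewrite invf_le1 ?ler1n ?ltr0n.
have inv_gt0 j : 0 < (j.+1%:R : R)^-1 by rewrite invr_gt0 ltr0Sn.
move: near_mid (near_sqr k) (near_sqr m) (inv_le1 k) (inv_le1 m) (inv_gt0 k) (inv_gt0 m).
move: (k.+1%:R^-1) (m.+1%:R^-1) => a b *.
have sqr_a : a ^+ 2 <= a by nra.
have sqr_b : b ^+ 2 <= b by nra.
lra.
Qed.

Lemma minimizing_cauchy : cauchy_seq ip u.
Proof.
move=> e e0; have d8 : 0 < 8 * d + 4 by move: d_ge0; lra.
have [N hN] := invSn_lt_eventually (divr_gt0 (exprn_gt0 2 e0) d8).
exists N => m k hm hk.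
rewrite -(ltr_sqr (x := hnorm _)) ?nnegrE ?hnorm_ge0 ?ltW // (sqr_hnorm hip).
apply: le_lt_trans (minimizing_sqr_dist k m) _.
move: (hN _ hm) (hN _ hk); rewrite !ltr_pdivlMr //.
by move: (k.+1%:R^-1) (m.+1%:R^-1) => a b; lra.
Qed.

Lemma minimizing_limit p : converges_to ip u p -> hnorm (w - p) <= d.
Proof.
move=> up; apply/ler_addgt0Pr => e e0.
have e2 : 0 < e / 2 by rewrite divr_gt0.
have [N1 hN1] := invSn_lt_eventually e2.
have [N2 hN2] := up _ e2.
pose k := maxn N1 N2.
have := hN1 k (leq_maxl _ _); have := hN2 k (leq_maxr _ _); have := u_near k.
have := ler_hdistD hip w (u k) p.
by move: (k.+1%:R^-1) => a; lra.
Qed.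

End MinimizingSequence.

Lemma exists_nearest : exists2 p, M p & forall q, M q -> hnorm (w - p) <= hnorm (w - q).
Proof.
have [M0 _ Mlim] := Mcl.
pose E : set R := [set r | exists2 q, M q & r = hnorm (w - q)]%classic.
have E_inf : has_inf E.
  by split; [exists (hnorm (w - 0)); exists 0 | exists 0 => _ [q _ ->]; apply: hnorm_ge0].
pose d := inf E.
have d_lb q : M q -> d <= hnorm (w - q) by move=> Mq; apply: (ge_inf E_inf.2); exists q.
have d_ge0 : 0 <= d by apply: lb_le_inf E_inf.1 _ => _ [q _ ->]; apply: hnorm_ge0.
have : forall k : nat, exists q, M q /\ hnorm (w - q) < d + (k.+1%:R)^-1.
  move=> k; have k_gt0 : 0 < (k.+1%:R : R)^-1 by rewrite invr_gt0 ltr0Sn.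
  have [_ [q Mq ->]] := inf_adherent k_gt0 E_inf.
  by exists q.
case/choice => u near_u.
have u_cauchy := minimizing_cauchy d_ge0 d_lb (fun k => (near_u k).1) (fun k => (near_u k).2).
have [p up] := proj2 hH u u_cauchy.
exists p; first by apply: (Mlim u) => // k; case: (near_u k).
move=> q Mq; apply: le_trans (d_lb _ Mq).
by apply: minimizing_limit up => k; case: (near_u k).
Qed.

Lemma orthogonal_projection : exists2 p, M p & forall n, M n -> ip (w - p) n = 0.
Proof.
have [p Mp p_near] := exists_nearest.
by exists p => //; apply: nearest_orthogonal.
Qed.

End Projection.

Section Riesz.
Variables (R : realType) (V : lmodType R[i]) (ip : V -> V -> R[i]).
Hypothesis hH : is_hilbert ip.
Let hip : is_inner_product ip := proj1 hH.
Local Notation hnorm := (hnorm ip).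

Lemma ip_cvg_eq0 u x y : converges_to ip u x -> (forall n, ip (u n) y = 0) -> ip x y = 0.
Proof.
move=> ux.
have Re_eq0 y' : (forall n, ip (u n) y' = 0) -> Re (ip x y') = 0.
  move=> u_y'; apply/eqP; rewrite -normr_le0; apply/ler_addgt0Pr => e e0.
  have y1 : 0 < hnorm y' + 1 by rewrite ltr_wpDl ?hnorm_ge0.
  have [N /(_ N (leqnn N))] := ux _ (divr_gt0 e0 y1); rewrite ltr_pdivlMr // => hN.
  have := normr_Re_ip_le hip (x - u N) y'; rewrite (ipBl hip) u_y' subr0 (hdistC hip).
  have := hnorm_ge0 ip y'; have := hnorm_ge0 ip (u N - x).
  move: hN; move: (hnorm y') (hnorm (u N - x)) => a b; nra.
move=> u_y; have u_iy n : ip (u n) ('i *: y) = 0 by rewrite (ipZr hip) u_y mulr0.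
have := Re_eq0 _ u_iy; rewrite (ipZr hip).
have := Re_eq0 _ u_y; case: (ip x y) => a b /= -> h.
by apply/eqP; rewrite eq_complex /= eqxx /=; apply/eqP; lra.
Qed.

Lemma riesz (f : V -> R[i]) :
  (forall a x y, f (a *: x + y) = a * f x + f y) ->
  (forall u x, converges_to ip u x -> (forall n, f (u n) = 0) -> f x = 0) ->
  exists z, forall x, f x = ip x z.
Proof.
move=> flin f_cvg.
have f0 : f 0 = 0.
  have := flin 1 0 0; rewrite scaler0 addr0 mul1r => h.
  by apply: (addrI (f 0)); rewrite addr0 -h.
have fZ a x : f (a *: x) = a * f x by rewrite -[a *: x]addr0 flin f0 addr0.
have fB x y : f (x - y) = f x - f y by rewrite -scaleN1r addrC flin mulN1r addrC.
have [[w0 fw0]|f_eq0] := pselect (exists w0, f w0 != 0); last first.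
  exists 0 => x; rewrite (ip0r hip); apply/eqP/negPn/negP => fx.
  by apply: f_eq0; exists x.
have ker_cl : closed_subspace ip (fun x => f x = 0).
  split=> //; first by move=> a x y fx fy; rewrite flin fx fy mulr0 addr0.
  by move=> u x fu ux; apply: f_cvg ux fu.
have [p fp p_orth] := orthogonal_projection hH w0 ker_cl.
set v := w0 - p.
have fv : f v = f w0 by rewrite fB fp subr0.
have vv : ip v v != 0.
  apply/negP => /eqP; case: hip => _ _ _ /[apply] v0.
  by move: fw0; rewrite -fv v0 f0 eqxx.
exists (conjc (f v / ip v v) *: v) => x.
rewrite (ipZr hip) conjcK.
have fx_v : f (f x *: v - f v *: x) = 0 by rewrite fB !fZ mulrC subrr.
have : ip (f x *: v - f v *: x) v = 0 by rewrite (ipC hip) p_orth // conjc0.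
rewrite (ipBl hip) !(ipZl hip) => /eqP; rewrite subr_eq0 => /eqP o.
by apply: (mulIf vv); rewrite mulrAC divfK // o.
Qed.

Lemma adjoint_exists T : bounded_op ip T -> exists A, is_adjoint ip T A /\ bounded_op ip A.
Proof.
case=> Tlin [K TK].
have TK' x : hnorm (T x) <= `|K| * hnorm x.
  exact: le_trans (TK x) (ler_wpM2r (hnorm_ge0 _ _) (ler_norm K)).
have : forall y, exists z, forall x, ip (T x) y = ip x z.
  move=> y; apply: riesz => [a x x'|u x ux Tu].
    by rewrite Tlin (ipDl hip) (ipZl hip).
  exact: ip_cvg_eq0 (bounded_lin_cvg Tlin TK' ux) Tu.
case/choice => A TA; exists A; split => //; split.
  move=> a y y'; apply: (ipr_inj hip) => x.
  by rewrite -TA (ipDr hip) (ipZr hip) !TA (ipDr hip) (ipZr hip).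
exists `|K| => y.
have sqr_le : hnorm (A y) ^+ 2 <= hnorm (A y) * (`|K| * hnorm y).
  rewrite (sqr_hnorm hip) /hnorm2 -TA; apply: le_trans (Re_ip_le hip _ _) _.
  by rewrite mulrA [hnorm (A y) * _]mulrC ler_wpM2r ?hnorm_ge0.
have := hnorm_ge0 ip (A y); have := mulr_ge0 (normr_ge0 K) (hnorm_ge0 ip y).
by move: sqr_le; move: (hnorm (A y)) (`|K| * hnorm y) => a b; nra.
Qed.

End Riesz.

Definition ratC {R : realType} (c : int * int * nat) : R[i] :=
  Complex (c.1.1%:~R / c.2.+1%:R) (c.1.2%:~R / c.2.+1%:R).

Lemma floor_approx (R : realType) (s r : R) : 0 < s ->
  0 <= r - (Num.floor (r * s))%:~R / s < s^-1.
Proof.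
move=> s0; have /andP [fl_le fl_gt] := floor_itv (r * s); rewrite intrD in fl_gt.
have -> : r - (Num.floor (r * s))%:~R / s = (r * s - (Num.floor (r * s))%:~R) / s.
  by rewrite mulrBl mulfK // lt0r_neq0.
apply/andP; split; first by rewrite divr_ge0 ?subr_ge0 // ltW.
by rewrite -[X in _ < X]mul1r ltr_pM2r ?invr_gt0 // ltrBlDl.
Qed.

Lemma ratC_approx (R : realType) (a : R[i]) e : 0 < e -> exists c, normc (a - ratC c) < e.
Proof.
move=> e0; have [N /(_ N (leqnn N))] := invSn_lt_eventually (divr_gt0 e0 (ltr0Sn _ 1)).
set s : R := N.+1%:R => hs; have s0 : 0 < s by rewrite ltr0Sn.
case: a => p q; exists (Num.floor (p * s), Num.floor (q * s), N).
have /andP [p1 p2] := floor_approx p s0; have /andP [q1 q2] := floor_approx q s0.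
rewrite /ratC /= -/s -(ltr_sqr (x := Num.sqrt _)) ?nnegrE ?sqrtr_ge0 ?ltW //.
rewrite sqr_sqrtr ?addr_ge0 ?sqr_ge0 //.
move: p1 p2 q1 q2 hs; set x := p - _; set y := q - _.
by move: x y (s^-1) => x y z; nra.
Qed.

Section ClosedSpan.
Variables (R : realType) (W : lmodType R[i]) (ip : W -> W -> R[i]).
Hypothesis hip : is_inner_product ip.
Variables (X : countType) (gen : X -> W).
Local Notation hnorm := (hnorm ip).

Definition closed_span (y : W) : Prop :=
  forall P, closed_subspace ip P -> (forall x, P (gen x)) -> P y.

Lemma closed_span_closed : closed_subspace ip closed_span.
Proof.
split=> [P [] //|a x y Mx My P Pcl Pgen|u x Mu ux P Pcl Pgen].
  by case: (Pcl) => _ Plin _; apply: Plin; [apply: Mx | apply: My].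
by case: (Pcl) => _ _ Plim; apply: (Plim u) => // n; apply: Mu.
Qed.

Lemma closed_span_gen x : closed_span (gen x).
Proof. by move=> P _; apply. Qed.

Lemma closed_span_invariant (L : W -> W) K : linear L ->
  (forall y, hnorm (L y) <= K * hnorm y) ->
  (forall x, closed_span (L (gen x))) -> Defs.invariant L closed_span.
Proof.
move=> Llin LK Lgen y My; have [M0 Mlin Mlim] := closed_span_closed.
apply: (My (fun y => closed_span (L y))) => //; split.
- by rewrite lin0.
- by move=> a x z Mx Mz; rewrite Llin; apply: Mlin.
- by move=> u x Mu ux; apply: (Mlim (L \o u)) => //; apply: bounded_lin_cvg ux.
Qed.

(* Coefficients are kept as lists of Gaussian rationals, multiplied out, so that scaling
   a combination by [ratC c] is again a combination. *)
Definition rat_comb (l : seq (seq (int * int * nat) * X)) : W :=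
  \sum_(t <- l) (\prod_(c <- t.1) ratC c) *: gen t.2.

Lemma rat_comb_cat l1 l2 : rat_comb (l1 ++ l2) = rat_comb l1 + rat_comb l2.
Proof. exact: big_cat. Qed.

Lemma rat_combZ c l : rat_comb [seq (c :: t.1, t.2) | t <- l] = ratC c *: rat_comb l.
Proof.
by rewrite /rat_comb big_map scaler_sumr; apply: eq_bigr => t _; rewrite big_cons scalerA.
Qed.

Lemma closed_span_rat_comb l : closed_span (rat_comb l).
Proof.
have [M0 Mlin _] := closed_span_closed.
elim: l => [|t l IH]; first by rewrite /rat_comb big_nil.
by rewrite /rat_comb big_cons; apply: Mlin => //; apply: closed_span_gen.
Qed.

Definition rat_approximable (y : W) : Prop :=
  forall e, 0 < e -> exists l, hnorm (y - rat_comb l) < e.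

Lemma rat_approximableD y y' :
  rat_approximable y -> rat_approximable y' -> rat_approximable (y + y').
Proof.
move=> ay ay' e e0; have e2 : 0 < e / 2 by rewrite divr_gt0.
have [l hl] := ay _ e2; have [l' hl'] := ay' _ e2.
exists (l ++ l'); rewrite rat_comb_cat opprD addrACA.
by apply: le_lt_trans (hnormD hip _ _) _; lra.
Qed.

Lemma rat_approximableZ a y : rat_approximable y -> rat_approximable (a *: y).
Proof.
move=> ay e e0; have e2 : 0 < e / 2 by rewrite divr_gt0.
have y1 : 0 < hnorm y + 1 by rewrite ltr_wpDl ?hnorm_ge0.
have [c hc] := ratC_approx a (divr_gt0 e2 y1).
have c1 : 0 < normc (ratC c : R[i]) + 1 by rewrite ltr_wpDl ?normc_ge0.
have [l hl] := ay _ (divr_gt0 e2 c1).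
exists [seq (c :: t.1, t.2) | t <- l]; rewrite rat_combZ.
have -> : a *: y - ratC c *: rat_comb l = (a - ratC c) *: y + ratC c *: (y - rat_comb l).
  by rewrite scalerBl scalerBr addrA subrK.
apply: le_lt_trans (hnormD hip _ _) _; rewrite !(hnormZ hip).
move: hc hl; rewrite !ltr_pdivlMr //.
have := hnorm_ge0 ip y; have := hnorm_ge0 ip (y - rat_comb l).
have := normc_ge0 (a - ratC c); have := normc_ge0 (ratC c).
move: (hnorm y) (hnorm (y - rat_comb l)) (normc (a - ratC c)) (normc (ratC c)) => *; nra.
Qed.

Lemma rat_approximable_closed : closed_subspace ip rat_approximable.
Proof.
split=> [e e0|a y y' ay ay'|u y au uy e e0].
- by exists [::]; rewrite /rat_comb big_nil subrr (hnorm0 hip).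
- exact/rat_approximableD/ay'/rat_approximableZ.
- have e2 : 0 < e / 2 by rewrite divr_gt0.
  have [N /(_ N (leqnn N))] := uy _ e2; have [l hl] := au N _ e2.
  exists l; apply: le_lt_trans (ler_hdistD hip _ (u N) _) _.
  by rewrite (hdistC hip); lra.
Qed.

Lemma closed_span_separable : separable_set ip closed_span.
Proof.
have approx y : closed_span y -> rat_approximable y.
  move=> My; apply: My rat_approximable_closed _ => x e e0; exists [:: ([::], x)].
  by rewrite /rat_comb big_seq1 big_nil scale1r subrr (hnorm0 hip).
exists (fun n => if unpickle n is Some l then rat_comb l else 0); split.
  by move=> n; case: unpickle => [l|]; [apply: closed_span_rat_comb | case: closed_span_closed].
move=> y /approx ay e /ay [l hl]; exists (pickle l).
by rewrite pickleK.
Qed.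

End ClosedSpan.

Section InvariantSpan.
Variables (R : realType) (W : lmodType R[i]) (ip : W -> W -> R[i]).
Hypothesis hip : is_inner_product ip.
Variables (I X : countType) (f : I -> W -> W) (s : X -> W).

(* For bounded [f i], the smallest closed subspace containing the range of [s] and
   invariant under every [f i]. *)
Definition invariant_span : W -> Prop :=
  closed_span ip (fun w : seq I * X => foldr f (s w.2) w.1).

Lemma invariant_span_closed : closed_subspace ip invariant_span.
Proof. exact: closed_span_closed. Qed.

Lemma invariant_span_seed x : invariant_span (s x).
Proof. exact: closed_span_gen ([::], x). Qed.

Lemma invariant_span_invariant i : bounded_op ip (f i) -> Defs.invariant (f i) invariant_span.
Proof.
case=> flin [K fK]; apply: closed_span_invariant flin fK _ => w.
exact: closed_span_gen (i :: w.1, w.2).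
Qed.

Lemma invariant_span_separable : separable_set ip invariant_span.
Proof. exact: closed_span_separable. Qed.

End InvariantSpan.

Section DenseImage.
Variables (R : realType) (V W : lmodType R[i]).
Variables (ipV : V -> V -> R[i]) (ipW : W -> W -> R[i]).
Hypothesis hipV : is_inner_product ipV.
Variables (L : V -> W) (K : R) (M : W -> Prop) (d : nat -> V).
Hypothesis Llin : linear L.
Hypothesis LK : forall x, hnorm ipW (L x) <= K * hnorm ipV x.
Hypothesis Mcl : closed_subspace ipW M.
Hypothesis d_dense : forall x, True -> forall e, 0 < e -> exists n, hnorm ipV (x - d n) < e.

Lemma closed_subspace_dense_image : (forall n, M (L (d n))) -> forall x, M (L x).
Proof.
move=> M_Ld x; have : forall k : nat, exists n, hnorm ipV (x - d n) < (k.+1%:R)^-1.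
  by move=> k; apply: d_dense => //; rewrite invr_gt0 ltr0Sn.
case/choice => n near_n.
have dx : converges_to ipV (d \o n) x.
  move=> e /invSn_lt_eventually [N hN]; exists N => k /hN; apply: lt_trans.
  by rewrite (hdistC hipV); apply: near_n.
case: Mcl => _ _ Mlim; apply: (Mlim (L \o (d \o n))) => [k|]; first exact: M_Ld.
exact: (bounded_lin_cvg Llin LK dx).
Qed.

End DenseImage.

Lemma unitary_equiv_onT (R : realType) (V : lmodType R[i]) (ip : V -> V -> R[i])
    (A B : V -> V) :
  unitary_equiv_on ip (fun _ => True) A B ->
  exists U Us, [/\ linear U, is_adjoint ip U Us, cancel Us U, cancel U Us &
                   forall z, B z = U (A (Us z))].
Proof.
case=> U [Us [_ [_ [Ulin [Uadj [UUs [UsU UE]]]]]]]; exists U, Us.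
by split=> [a x y|x y|x|x|x]; [apply: Ulin|apply: Uadj|apply: UUs|apply: UsU|apply: UE].
Qed.

Section UnitaryBlocks.
Variables (R : realType) (H Ht : lmodType R[i]).
Variables (ip1 : H -> H -> R[i]) (ip2 : Ht -> Ht -> R[i]).
Hypotheses (hip1 : is_inner_product ip1) (hip2 : is_inner_product ip2).
Local Notation ipP := (dsum_ip ip1 ip2).

(* The lower row of the block matrix [[F11, F12], [F21, F22]] of [F] on [H (+) Ht]. *)
Definition block21 (F : H * Ht -> H * Ht) (h : H) : Ht := (F (h, 0)).2.
Definition block22 (F : H * Ht -> H * Ht) (y : Ht) : Ht := (F (0, y)).2.

Let pairZD (a : R[i]) (x1 y1 : H) (x2 y2 : Ht) :
  (a *: x1 + y1, a *: x2 + y2) = a *: (x1, x2) + (y1, y2).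
Proof. by []. Qed.

Section Blocks.
Variable F : H * Ht -> H * Ht.
Hypothesis Flin : linear F.
Hypothesis Fiso : forall z, ipP (F z) (F z) = ipP z z.

Lemma block21_linear : linear (block21 F).
Proof.
move=> a h h'; rewrite /block21.
by have := pairZD a h h' 0 0; rewrite scaler0 addr0 => ->; rewrite Flin.
Qed.

Lemma block22_linear : linear (block22 F).
Proof.
move=> a y y'; rewrite /block22.
by have := pairZD a 0 0 y y'; rewrite scaler0 addr0 => ->; rewrite Flin.
Qed.

Lemma snd_blocks z : (F z).2 = block21 F z.1 + block22 F z.2.
Proof.
case: z => h y; rewrite /block21 /block22 /=.
have := pairZD 1 h 0 0 y; rewrite [1 *: h]scale1r scaler0 addr0 add0r => ->.
by rewrite Flin /= scale1r.
Qed.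

Let hnorm2_snd_le z : hnorm2 ip2 (F z).2 <= hnorm2 ip1 z.1 + hnorm2 ip2 z.2.
Proof.
have := hnorm2_ge0 hip1 (F z).1; have := congr1 (@complex.Re R) (Fiso z).
rewrite /dsum_ip /hnorm2.
by case: (ip1 (F z).1 _) (ip2 (F z).2 _) (ip1 z.1 _) (ip2 z.2 _) => ? ? [? ?] [? ?] [? ?] /=; lra.
Qed.

Lemma block21_le h : hnorm ip2 (block21 F h) <= 1 * hnorm ip1 h.
Proof.
rewrite mul1r; apply: ler_wsqrtr.
by have := hnorm2_snd_le (h, 0); rewrite /hnorm2 /= (ip0l hip2) addr0.
Qed.

Lemma block22_le y : hnorm ip2 (block22 F y) <= 1 * hnorm ip2 y.
Proof.
rewrite mul1r; apply: ler_wsqrtr.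
by have := hnorm2_snd_le (0, y); rewrite /hnorm2 /= (ip0l hip1) add0r.
Qed.

Lemma block22_bounded : bounded_op ip2 (block22 F).
Proof. by split; [exact: block22_linear | exists 1; exact: block22_le]. Qed.

End Blocks.

Section Unitary.
Variables U Us : H * Ht -> H * Ht.
Hypothesis Ulin : linear U.
Hypothesis Uadj : is_adjoint ipP U Us.
Hypotheses (UUs : cancel Us U) (UsU : cancel U Us).

Lemma unitary_adjoint_linear : linear Us.
Proof. by move=> a z z'; rewrite -{1}(UUs z) -{1}(UUs z') -Ulin UsU. Qed.

Lemma unitary_isometry z : ipP (U z) (U z) = ipP z z.
Proof. by rewrite Uadj UsU. Qed.

Lemma unitary_adjoint_isometry z : ipP (Us z) (Us z) = ipP z z.
Proof. by rewrite -Uadj UUs. Qed.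

Lemma unitary_equiv_on_snd (M : Ht -> Prop) (A B : H * Ht -> H * Ht) :
  closed_subspace ip2 M ->
  (forall h, M (block21 U h)) -> (forall h, M (block21 Us h)) ->
  Defs.invariant (block22 U) M -> Defs.invariant (block22 Us) M ->
  (forall z, B z = U (A (Us z))) ->
  unitary_equiv_on ipP (fun z => M z.2) A B.
Proof.
move=> Mcl M21U M21Us M22U M22Us BE; exists U, Us.
split=> [z Mz|]; first by rewrite snd_blocks //; apply: (closed_subspaceD Mcl); auto.
split=> [z Mz|].
  rewrite snd_blocks //; last exact: unitary_adjoint_linear.
  by apply: (closed_subspaceD Mcl); auto.
split; first by move=> *; apply: Ulin.
by split; [|split; [|split]] => *; [apply: Uadj|apply: UUs|apply: UsU|apply: BE].
Qed.

End Unitary.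
End UnitaryBlocks.

Close Scope complex_scope.

Theorem lemma3p2 (R : realType)
  (H : lmodType R[i]) (ip1 : H -> H -> R[i])
  (Ht : lmodType R[i]) (ip2 : Ht -> Ht -> R[i])
  (hH : is_hilbert ip1) (sepH : separable_space ip1)
  (infH : infinite_dimensional H)
  (hHt : is_hilbert ip2)
  (T1 T3 : H -> H) (T2 T4 : Ht -> Ht)
  (bT1 : bounded_op ip1 T1) (bT3 : bounded_op ip1 T3)
  (bT2 : bounded_op ip2 T2) (bT4 : bounded_op ip2 T4)
  (ue : unitary_equiv_on (dsum_ip ip1 ip2) (fun _ => True)
          (dsum_op T1 T2) (dsum_op T3 T4)) :
  exists M : Ht -> Prop,
    [/\ closed_subspace ip2 M, separable_set ip2 M,
        reducing ip2 T2 M, reducing ip2 T4 M &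
        unitary_equiv_on (dsum_ip ip1 ip2) (fun x => M x.2)
          (dsum_op T1 T2) (dsum_op T3 T4)].
Proof.
have [hip1 hip2] := (proj1 hH, proj1 hHt).
have [U [Us [Ulin Uadj UUs UsU UE]]] := unitary_equiv_onT ue.
have Uslin := unitary_adjoint_linear Ulin UUs UsU.
have Uiso := unitary_isometry Uadj UsU; have Usiso := unitary_adjoint_isometry Uadj UUs.
have [A2 [adjA2 bA2]] := adjoint_exists hHt bT2.
have [A4 [adjA4 bA4]] := adjoint_exists hHt bT4.
have [d [_ d_dense]] := sepH.
pose ops (i : nat) := match i with
  0 => T2 | 1 => A2 | 2 => T4 | 3 => A4 | 4 => block22 U | _ => block22 Us end.
pose seed (x : bool * nat) := block21 (if x.1 then Us else U) (d x.2).
pose M := invariant_span ip2 ops seed.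
have Mcl : closed_subspace ip2 M := invariant_span_closed ip2 ops seed.
have Minv i : Defs.invariant (ops i) M.
  apply: invariant_span_invariant; case: i => [|[|[|[|[|i]]]]] //=.
    exact: (block22_bounded hip1 Ulin Uiso).
  exact: (block22_bounded hip1 Uslin Usiso).
have M21 b : forall h, M (block21 (if b then Us else U) h).
  have seedM n : M (seed (b, n)) := invariant_span_seed (b, n).
  case: b seedM => seedM.
    exact: (closed_subspace_dense_image hip1 (block21_linear Uslin)
              (block21_le hip1 hip2 Usiso) Mcl d_dense seedM).
  exact: (closed_subspace_dense_image hip1 (block21_linear Ulin)
            (block21_le hip1 hip2 Uiso) Mcl d_dense seedM).
exists M; split=> //; first exact: invariant_span_separable.
- by split; [exact: (Minv 0%N) | exists A2; split; [|exact: (Minv 1%N)]].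
- by split; [exact: (Minv 2%N) | exists A4; split; [|exact: (Minv 3%N)]].
exact: (unitary_equiv_on_snd Ulin Uadj UUs UsU Mcl (M21 false) (M21 true)
          (Minv 4%N) (Minv 5%N) UE).
Qed.
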